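(* There exist a finite action set $\mathcal{A}$, a deterministic environment, a policy $\pi$ and a nonempty target set $\mathcal{N}^g$ with $\pi(n)>0$ for every $n\in\mathcal{N}^g$, such that the generic tree search which at every iteration $k$ selects $n_k\in\arg\max_{n\in\mathcal{F}_k}\pi(n)$ (ties broken arbitrarily) never selects any node of $\mathcal{N}^g$.
   Context: Setting: a finite action set $\mathcal{A}$, a set of states $\mathcal{S}$ with initial state $s_0$, a deterministic transition function $T:\mathcal{S}\times\mathcal{A}\to\mathcal{S}$, and a set of goal states $\mathcal{G}\subseteq\mathcal{S}$. Nodes are finite sequences of actions; the root $n_0$ is the empty sequence; $T(n)$ denotes the state reached from $s_0$ by applying the actions of $n$ in order; the children of $n$ are the sequences $na$, $a\in\mathcal{A}$. The target set is $\mathcal{N}^g=\{n : T(n)\in\mathcal{G}\}$. A policy is a function $\pi$ from nodes to $[0,1]$ with $\pi(n_0)=1$ and $\pi(n)=\sum_{a\in\mathcal{A}}\pi(na)$ for every node $n$. Generic tree search: $\mathcal{V}_1=\emptyset$, $\mathcal{F}_1=\{n_0\}$; at iteration $k\ge 1$ a node $n_k\in\mathcal{F}_k$ is selected; if $n_k\in\mathcal{N}^g$ the search stops with success; otherwise $\mathcal{V}_{k+1}=\mathcal{V}_k\cup\{n_k\}$ and $\mathcal{F}_{k+1}=\bigl(\bigcup_{n\in\mathcal{V}_{k+1}}\{na:a\in\mathcal{A}\}\bigr)\setminus\mathcal{V}_{k+1}$. *)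

From Stdlib Require Import Reals.
From mathcomp Require Import all_boot.
Set Implicit Arguments. Unset Strict Implicit. Unset Printing Implicit Defensive.

(* Nodes are sequences of actions, [::] is the root n0, child "n a" is rcons n a. *)

Definition reach (A S : Type) (T : S -> A -> S) (s0 : S) (n : seq A) : S :=
  foldl T s0 n.

Definition is_policy (A : finType) (pi : seq A -> R) : Prop :=
  (forall n, Rle R0 (pi n) /\ Rle (pi n) R1) /\ pi [::] = R1 /\
  (forall n, pi n = \big[Rplus/R0]_(a : A) pi (rcons n a)).

(* Selections are indexed from 0: sel k is the node selected at iteration k+1.
   The visited set before iteration k+1 is V = {sel j | j < k}.
   frontier sel k m : m belongs to F_{k+1}; F_1 = {n0}, and otherwise
   F = (children of V) \ V. *)
Definition frontier (A : finType) (sel : nat -> seq A) (k : nat) (m : seq A) : Prop :=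
  if k is 0 then m = [::]
  else (exists j a, (j < k)%N /\ m = rcons (sel j) a) /\
       (forall j, (j < k)%N -> m <> sel j).

Definition greedy_choice (A : finType) (pi : seq A -> R) (sel : nat -> seq A) (j : nat) : Prop :=
  frontier sel j (sel j) /\ (forall m, frontier sel j m -> Rle (pi m) (pi (sel j))).

(* sel 0 .. sel k is a valid execution prefix of the greedy search:
   every choice is greedy, and the search did not stop before iteration k+1
   (no previously selected node is a target). *)
Definition greedy_run (A : finType) (S : Type) (T : S -> A -> S) (s0 : S) (G : S -> Prop)
  (pi : seq A -> R) (sel : nat -> seq A) (k : nat) : Prop :=
  (forall j, (j <= k)%N -> greedy_choice pi sel j) /\
  (forall j, (j < k)%N -> ~ G (reach T s0 (sel j))).

From Stdlib Require Import Reals Lra.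
From mathcomp Require Import all_boot.

Set Implicit Arguments.
Unset Strict Implicit.
Unset Printing Implicit Defensive.

(* Take binary actions, let the state be the node itself, and let the only
   target be the child [false] of the root.  The policy keeps mass above 1/2
   on the all-true spine and spreads the remaining mass geometrically, so
   every node off the spine (including the target) has positive mass, but
   less than every spine node.  The frontier always contains the next
   spine node, hence the greedy search descends the spine forever. *)

Lemma reach_rcons_nil (A : Type) (n : seq A) : reach (fun s a => rcons s a) [::] n = n.
Proof. by elim/last_ind: n => // n a IH; rewrite /reach foldl_rcons -/(reach _ _ _) IH. Qed.

Lemma rcons_nseq (T : Type) (j : nat) (a : T) : rcons (nseq j a) a = nseq j.+1 a.
Proof. by rewrite -cats1 -addn1 nseqD. Qed.

Section GreedySpine.

Variables (A : finType) (a : A) (pi : seq A -> R) (sel : nat -> seq A).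

Lemma frontier_spine_next j :
  (forall i, (i <= j)%N -> sel i = nseq i a) -> frontier sel j.+1 (nseq j.+1 a).
Proof.
move=> spine; split.
- by exists j, a; rewrite spine // rcons_nseq.
- move=> i lt_ij /(congr1 size); rewrite spine // !size_nseq => eq_ij.
  by rewrite eq_ij ltnn in lt_ij.
Qed.

Lemma frontier_spine_uniq j m :
  (forall i, (i <= j)%N -> sel i = nseq i a) -> frontier sel j.+1 m ->
  all (pred1 a) m -> m = nseq j.+1 a.
Proof.
move=> spine [[i [b [le_ij ->]]] unvisited]; rewrite ltnS in le_ij.
rewrite spine // in unvisited * => /all_pred1P.
rewrite size_rcons size_nseq => on_spine.
move: le_ij; rewrite leq_eqVlt => /orP [/eqP eq_ij | lt_ij]; first by rewrite -eq_ij.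
by case: (unvisited i.+1 lt_ij); rewrite spine.
Qed.

Hypothesis spine_dominates :
  forall m n, all (pred1 a) m -> ~~ all (pred1 a) n -> Rlt (pi n) (pi m).

Lemma greedy_follows_spine k :
  (forall j, (j <= k)%N -> greedy_choice pi sel j) ->
  forall j, (j <= k)%N -> sel j = nseq j a.
Proof.
move=> greedy; elim/ltn_ind=> -[|j] IH le_jk; first by have [] := greedy 0%N le_jk.
have spine i : (i <= j)%N -> sel i = nseq i a.
  by move=> le_ij; apply: IH; [rewrite ltnS | apply: leq_trans le_ij (ltnW le_jk)].
have [in_frontier maximal] := greedy j.+1 le_jk.
apply: (frontier_spine_uniq spine in_frontier).
apply/negPn/negP => off_spine.
have := maximal _ (frontier_spine_next spine).
by apply: Rlt_not_le; apply: spine_dominates off_spine; apply: all_pred1_nseq.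
Qed.

End GreedySpine.

Lemma big_bool_Rplus (f : bool -> R) :
  \big[Rplus/R0]_(b : bool) f b = Rplus (f true) (Rplus (f false) R0).
Proof. by rewrite unlock /index_enum !unlock. Qed.

Local Open Scope R_scope.

Definition spine_pi (n : seq bool) : R :=
  if all (pred1 true) n then / 2 + (/ 2) ^ (size n).+1 else (/ 2) ^ (size n).+1.

Lemma half_pow_bounds m : 0 < (/ 2) ^ m <= 1.
Proof. by elim: m => [|m IH] /=; lra. Qed.

Lemma spine_pi_policy : is_policy spine_pi.
Proof.
change R0 with 0; change R1 with 1; split; [|split].
- move=> n; have := half_pow_bounds (size n).
  by rewrite /spine_pi; case: (all _ _) => /=; lra.
- by rewrite /spine_pi /=; lra.
- move=> n; rewrite big_bool_Rplus /spine_pi !all_rcons !size_rcons /=.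
  by case: (all _ _) => /=; lra.
Qed.

Lemma spine_pi_gt0 (n : seq bool) : 0 < spine_pi n.
Proof.
have := half_pow_bounds (size n).
by rewrite /spine_pi; case: (all _ _) => /=; lra.
Qed.

Lemma spine_pi_dominates (m n : seq bool) :
  all (pred1 true) m -> ~~ all (pred1 true) n -> spine_pi n < spine_pi m.
Proof.
move=> on_spine /negbTE off_spine; rewrite /spine_pi on_spine off_spine /=.
have := half_pow_bounds (size m); have := half_pow_bounds (size n); lra.
Qed.

Local Close Scope R_scope.

Theorem theorem1 :
  exists (A : finType) (S : Type) (s0 : S) (T : S -> A -> S) (G : S -> Prop) (pi : seq A -> R),
    is_policy pi /\
    (exists n : seq A, G (reach T s0 n)) /\
    (forall n : seq A, G (reach T s0 n) -> Rlt R0 (pi n)) /\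
    (forall (sel : nat -> seq A) (k : nat),
        greedy_run T s0 G pi sel k -> ~ G (reach T s0 (sel k))).
Proof.
exists bool, (seq bool), [::], (fun s a => rcons s a), (fun s => s = [:: false]), spine_pi.
split; first exact: spine_pi_policy.
split; first by exists [:: false]; rewrite reach_rcons_nil.
split; first by move=> n _; apply: spine_pi_gt0.
move=> sel k [greedy _].
rewrite reach_rcons_nil (greedy_follows_spine spine_pi_dominates greedy (leqnn k)).
by case: k {greedy} => [|[|k]].
Qed.
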